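(* Let $(\mathcal S,\mathcal A,H,P,R,\mu)$ be an episodic tabular MDP as in the context, with non-negative mean rewards $r$, and let $C\ge1$. Assume that for every $(h,s)\in[H]\times\mathcal S$ such that $r_h(s,a)>0$ for some $a$, we have $\min_{a}r_h(s,a)>0$ and $\max_a r_h(s,a)/\min_a r_h(s,a)\le C$. Then $CR^1(P,r)\ge\frac{1}{AC}$.
   Context: Episodic tabular MDP $(\mathcal S,\mathcal A,H,P,R,\mu)$: finite state space $\mathcal S$ with $|\mathcal S|=S$, finite action space $\mathcal A$ with $|\mathcal A|=A$, horizon $H\in\mathbb N$, transition kernels $P_h(\cdot\mid s,a)$, initial state distribution $\mu$, and random non-negative rewards $R_h(s,a)$ for $(h,s,a)\in\mathcal X:=[H]\times\mathcal S\times\mathcal A$. Initially $s_1\sim\mu$; at step $h$ the agent in state $s_h$ picks $a_h$, receives $R_h(s_h,a_h)$ and moves to $s_{h+1}\sim P_h(\cdot\mid s_h,a_h)$. All rewards are drawn before the interaction. The vectors $\mathcal R_h=\{R_h(s,a)\}_{s,a}$ for different $h$ are mutually independent (entries of one $\mathcal R_h$ may be arbitrarily correlated); rewards are independent of transitions, and transitions are independent across steps. Let $r_h(s,a)=\mathbb E[R_h(s,a)]$ and let $\mathcal D(r)$ denote the set of all such reward distributions with means $r$. For $L\in\{0,\dots,H\}$ an $L$-lookahead policy draws $a_h\sim\pi_h(\cdot\mid s_h,\mathcal R_h^L)$, where $\mathcal R_h^L=(\mathcal R_t)_{h\le t\le\min(h+L-1,H)}$ and $\mathcal R_h^0=\emptyset$;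 $\Pi^L$ is the set of these policies. The value is $V^{L,\pi}(P,r)=\mathbb E[\sum_{h=1}^H R_h(s_h,a_h)]$, and $V^{L,*}(P,r)=\sup_{\pi\in\Pi^L}V^{L,\pi}(P,r)$. The competitive ratio is $CR^L(P,r)=\inf_{\mathcal D(r)}V^{0,*}(P,r)/V^{L,*}(P,r)$, with the convention that any division by zero equals $+\infty$. In particular $CR^1$ compares no-lookahead agents to agents that observe the current step's rewards $\mathcal R_h$ before acting. *)

From HB Require Import structures.
From mathcomp Require Import all_boot all_order all_algebra.
From mathcomp Require Import all_classical all_reals all_analysis.
Set Implicit Arguments. Unset Strict Implicit. Unset Printing Implicit Defensive.
Import Order.TTheory GRing.Theory Num.Theory.
Local Open Scope classical_set_scope.
Local Open Scope ring_scope.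

Section MDP.
Variables (R : realType) (S A : finType) (H : nat).

(* Steps are indexed 0, ..., H-1 (the paper's 1, ..., H). *)

(* Transition kernels P h s a s' = P_h(s' | s, a) and initial distribution mu. *)
Definition valid_mdp (P : nat -> S -> A -> S -> R) (mu : S -> R) : Prop :=
  [/\ (forall s, 0 <= mu s), \sum_(s : S) mu s = 1,
      (forall h s a s', (h < H)%N -> 0 <= P h s a s') &
      (forall h s a, (h < H)%N -> \sum_(s' : S) P h s a s' = 1)].

(* A reward distribution in D(r), realized on a probability space (T, Pr):
   X h w is the reward vector R_h = {R_h(s,a)}_{s,a} at step h.  Entries of
   one R_h may be arbitrarily correlated.  The steps are mutually
   independent and independent from the transitions: this is encoded in the
   value below, which only uses the law of each R_h separately (i.e. the
   value is computed under the independent coupling of the R_h). *)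
Definition reward_dist (dT : measure_display) (T : measurableType dT)
  (Pr : probability T R) (r : nat -> S -> A -> R)
  (X : nat -> T -> S -> A -> R) : Prop :=
  forall h s a, (h < H)%N ->
    [/\ measurable_fun setT (fun w => X h w s a),
        (forall w, 0 <= X h w s a) &
        (\int[Pr]_w (X h w s a)%:E = (r h s a)%:E)%E].

(* A (possibly randomized, Markov) lookahead policy:
   pi h s rho a = probability of choosing a at step h in state s when the
   observed current reward vector is rho (1-lookahead). *)
Definition policy := nat -> S -> (S -> A -> R) -> A -> R.

Definition valid_policy (dT : measure_display) (T : measurableType dT)
  (X : nat -> T -> S -> A -> R) (pi : policy) : Prop :=
  [/\ (forall h s rho a, 0 <= pi h s rho a),
      (forall h s rho, \sum_(a : A) pi h s rho a = 1) &
      (forall h s a, measurable_fun setT (fun w => pi h s (X h w) a))].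

Definition no_lookahead (pi : policy) : Prop :=
  forall h s rho rho' a, pi h s rho a = pi h s rho' a.

Fixpoint occupancy (dT : measure_display) (T : measurableType dT)
  (Pr : probability T R) (P : nat -> S -> A -> S -> R) (mu : S -> R)
  (X : nat -> T -> S -> A -> R) (pi : policy) (h : nat) : S -> R :=
  match h with
  | 0 => mu
  | h'.+1 => fun s' =>
      \sum_(s : S) occupancy Pr P mu X pi h' s *
        fine (\int[Pr]_w (\sum_(a : A) pi h' s (X h' w) a * P h' s a s')%:E)%E
  end.

(* Value V^{pi} = E[ sum_h R_h(s_h, a_h) ]; since R_h is independent of s_h,
   E[R_h(s_h,a_h)] = sum_s Pr(s_h = s) E[ sum_a pi_h(a|s,R_h) R_h(s,a) ]. *)
Definition value (dT : measure_display) (T : measurableType dT)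
  (Pr : probability T R) (P : nat -> S -> A -> S -> R) (mu : S -> R)
  (X : nat -> T -> S -> A -> R) (pi : policy) : \bar R :=
  (\sum_(h < H) \sum_(s : S)
     (occupancy Pr P mu X pi h s)%:E *
     \int[Pr]_w (\sum_(a : A) pi h s (X h w) a * X h w s a)%:E)%E.

Definition Vstar0 (dT : measure_display) (T : measurableType dT)
  (Pr : probability T R) (P : nat -> S -> A -> S -> R) (mu : S -> R)
  (X : nat -> T -> S -> A -> R) : \bar R :=
  ereal_sup [set value Pr P mu X pi | pi in
              [set pi | valid_policy X pi /\ no_lookahead pi]].

Definition Vstar1 (dT : measure_display) (T : measurableType dT)
  (Pr : probability T R) (P : nat -> S -> A -> S -> R) (mu : S -> R)
  (X : nat -> T -> S -> A -> R) : \bar R :=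
  ereal_sup [set value Pr P mu X pi | pi in [set pi | valid_policy X pi]].

(* Division with the convention x / 0 = +oo (values are finite here). *)
Definition crdiv (x y : \bar R) : \bar R :=
  if y == 0%E then +oo%E else (x * ((fine y)^-1)%:E)%E.

Definition CR1 (P : nat -> S -> A -> S -> R) (mu : S -> R)
  (r : nat -> S -> A -> R) : \bar R :=
  ereal_inf [set v | exists (dT : measure_display) (T : measurableType dT)
                        (Pr : probability T R) (X : nat -> T -> S -> A -> R),
                        reward_dist Pr r X /\
                        v = crdiv (Vstar0 Pr P mu X) (Vstar1 Pr P mu X)].

End MDP.

From HB Require Import structures.
From mathcomp Require Import all_boot all_order all_algebra.
From mathcomp Require Import all_classical all_reals all_analysis.
From mathcomp Require Import measurable_realfun.
Import Order.TTheory GRing.Theory Num.Theory.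
Local Open Scope ring_scope.

(* Averaging a 1-lookahead policy pi over the current reward vector gives a
   no-lookahead policy that plays a in state s at step h with probability
   m_h(a|s) = E[pi_h(a|s,R_h)].  As R_h is independent of s_h and of the
   transitions, both policies induce the same state distributions d_h.  In
   state s the lookahead agent collects at most sum_a r_h(s,a), the averaged
   one collects exactly sum_a m_h(a|s) r_h(s,a), and the ratio condition gives
   sum_a r_h(s,a) <= A C sum_a m_h(a|s) r_h(s,a).  Hence V^{1,*} <= A C V^{0,*}. *)

Lemma ler_sum_term (R : numDomainType) (I : finType) (F : I -> R) (i : I) :
  (forall j, 0 <= F j) -> F i <= \sum_j F j.
Proof. by move=> F0; rewrite (bigD1 i) //= lerDl sumr_ge0. Qed.

Lemma sum_le_card_mul_convex (R : numDomainType) (I : finType) (m x : I -> R)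
    (C : R) :
  (forall i, 0 <= m i) -> \sum_i m i = 1 -> (forall i j, x i <= C * x j) ->
  \sum_i x i <= #|I|%:R * C * \sum_i m i * x i.
Proof.
move=> m0 m1 xC.
have -> : \sum_i x i = \sum_j m j * \sum_i x i by rewrite -mulr_suml m1 mul1r.
rewrite mulr_sumr; apply: ler_sum => j _; rewrite mulrCA ler_wpM2l //.
apply: (@le_trans _ _ (\sum_(i : I) C * x j)); first exact: ler_sum.
by rewrite sumr_const -mulrA mulr_natl.
Qed.

Lemma crdiv_ge_inv (R : realType) (x y : \bar R) (c : R) :
  0 < c -> (0 <= y)%E -> y \is a fin_num -> (y <= c%:E * x)%E ->
  ((1 / c)%:E <= crdiv x y)%E.
Proof.
move=> c0 y0 yfin ycx; rewrite /crdiv; case: eqP => [_|yn0]; first exact: leey.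
have /fineK yE := yfin; set v := fine y in yE.
have v0 : 0 < v.
  by rewrite lt_neqAle fine_ge0 // andbT; apply/eqP => v0; apply: yn0; rewrite -yE -v0.
move: ycx; rewrite -yE; case: x => [x| |] ycx.
- rewrite -EFinM lee_fin ler_pdivlMr // mul1r mulrC ler_pdivrMr // mulrC.
  by rewrite -lee_fin EFinM.
- by rewrite gt0_mulye ?leey // lte_fin invr_gt0.
- by move: ycx; rewrite gt0_muleNy ?lte_fin // leeNy_eq.
Qed.

Section ProbabilityIntegral.
Context {R : realType} {dT : measure_display} {T : measurableType dT}
  (Pr : probability T R).

Lemma integral_cst_probability (x : R) : (\int[Pr]_w x%:E = x%:E)%E.
Proof. by rewrite integral_cst //= probability_setT mule1. Qed.

Lemma ge0_integral_wsum {I : finType} {f : I -> T -> R} {c m : I -> R} :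
  (forall i, measurable_fun setT (f i)) -> (forall i w, 0 <= f i w) ->
  (forall i, 0 <= c i) -> (forall i, (\int[Pr]_w (f i w)%:E = (m i)%:E)%E) ->
  (\int[Pr]_w (\sum_i c i * f i w)%:E = (\sum_i c i * m i)%:E)%E.
Proof.
move=> mf f0 c0 fm.
under eq_integral do rewrite -sumEFin.
rewrite ge0_integral_sum //; last by move=> i w _; rewrite lee_fin mulr_ge0.
- rewrite -sumEFin; apply: eq_bigr => i _.
  under eq_integral do rewrite EFinM.
  rewrite ge0_integralZl_EFin ?fm //; last exact/measurable_EFinP.
  by move=> w _; rewrite lee_fin.
- by move=> i; apply/measurable_EFinP/measurable_funM.
Qed.

Lemma integral_unit_interval {g : T -> R} :
  measurable_fun setT g -> (forall w, 0 <= g w <= 1) ->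
  exists2 p, (\int[Pr]_w (g w)%:E = p%:E)%E & 0 <= p <= 1.
Proof.
move=> mg g01.
have g0 w : (0 <= (g w)%:E)%E by rewrite lee_fin; case/andP: (g01 w).
have ge0 : (0 <= \int[Pr]_w (g w)%:E)%E by exact: integral_ge0.
have le1 : (\int[Pr]_w (g w)%:E <= 1)%E.
  rewrite -(integral_cst_probability 1); apply: ge0_le_integral => //.
  - exact/measurable_EFinP.
  - by move=> w _; rewrite lee_fin; case/andP: (g01 w).
have fin : (\int[Pr]_w (g w)%:E)%E \is a fin_num.
  by rewrite ge0_fin_numE // (le_lt_trans le1) // ltry.
exists (fine (\int[Pr]_w (g w)%:E)%E); first by rewrite fineK.
by rewrite fine_ge0 //= -lee_fin fineK.
Qed.

End ProbabilityIntegral.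

Section LookaheadAveraging.
Context (R : realType) (S A : finType) (H : nat)
  (P : nat -> S -> A -> S -> R) (mu : S -> R) (r : nat -> S -> A -> R)
  (dT : measure_display) (T : measurableType dT) (Pr : probability T R)
  (X : nat -> T -> S -> A -> R).
Hypotheses (mdp : valid_mdp H P mu) (rewards : reward_dist H Pr r X).

Local Notation occ := (occupancy Pr P mu X).
Local Notation val := (value H Pr P mu X).

Definition mean_policy (pi : policy R S A) h s a : R :=
  fine (\int[Pr]_w (pi h s (X h w) a)%:E)%E.

Definition averaged_policy (pi : policy R S A) : policy R S A :=
  fun h s _ a => mean_policy pi h s a.

Lemma transition_ge0 h s a s' : (h < H)%N -> 0 <= P h s a s'.
Proof. by case: mdp => _ _ + _; apply. Qed.

Lemma reward_ge0 h s a w : (h < H)%N -> 0 <= X h w s a.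
Proof. by move=> hH; case: (rewards h s a hH). Qed.

Lemma reward_measurable h s a : (h < H)%N -> measurable_fun setT (fun w => X h w s a).
Proof. by move=> hH; case: (rewards h s a hH). Qed.

Lemma reward_mean h s a : (h < H)%N -> (\int[Pr]_w (X h w s a)%:E = (r h s a)%:E)%E.
Proof. by move=> hH; case: (rewards h s a hH). Qed.

Lemma mean_reward_ge0 h s a : (h < H)%N -> 0 <= r h s a.
Proof.
move=> hH; rewrite -lee_fin -reward_mean //.
by apply: integral_ge0 => w _; rewrite lee_fin reward_ge0.
Qed.

Section ValidPolicy.
Context { pi : policy R S A } (pi_valid : valid_policy X pi).

Lemma policy_ge0 h s rho a : 0 <= pi h s rho a.
Proof. by case: pi_valid. Qed.

Lemma policy_le1 h s rho a : pi h s rho a <= 1.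
Proof.
by case: pi_valid => _ /(_ h s rho) <- _; apply: ler_sum_term => b; apply: policy_ge0.
Qed.

Lemma mean_policy_integral h s a :
  (\int[Pr]_w (pi h s (X h w) a)%:E = (mean_policy pi h s a)%:E)%E.
Proof.
have [_ _ pim] := pi_valid.
have pi01 w : 0 <= pi h s (X h w) a <= 1 by rewrite policy_ge0 policy_le1.
by rewrite /mean_policy; have [p -> _] := integral_unit_interval Pr (pim h s a) pi01.
Qed.

Lemma mean_policy_ge0 h s a : 0 <= mean_policy pi h s a.
Proof.
rewrite -lee_fin -mean_policy_integral.
by apply: integral_ge0 => w _; rewrite lee_fin policy_ge0.
Qed.

Lemma mean_policy_sum1 h s : \sum_a mean_policy pi h s a = 1.
Proof.
have [_ pi1 pim] := pi_valid.
apply: EFin_inj; rewrite -(integral_cst_probability Pr 1).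
transitivity (\int[Pr]_w (\sum_a 1 * pi h s (X h w) a)%:E)%E.
  rewrite (ge0_integral_wsum Pr (pim h s) (fun a w => policy_ge0 h s (X h w) a)
    (fun _ => ler01) (mean_policy_integral h s)).
  by congr (_%:E); apply: eq_bigr => a _; rewrite mul1r.
by apply: eq_integral => w _; under eq_bigr do rewrite mul1r; rewrite pi1.
Qed.

Lemma occupancyS h s' : (h < H)%N ->
  occ pi h.+1 s' = \sum_s occ pi h s * \sum_a mean_policy pi h s a * P h s a s'.
Proof.
move=> hH /=; apply: eq_bigr => s _; congr (_ * _).
under eq_integral do under eq_bigr do rewrite mulrC.
have [_ _ pim] := pi_valid.
rewrite (ge0_integral_wsum Pr (pim h s) (fun a w => policy_ge0 h s (X h w) a)
  (fun a => transition_ge0 h s a s' hH) (mean_policy_integral h s)) /=.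
by apply: eq_bigr => a _; rewrite mulrC.
Qed.

Lemma occupancy_ge0 h s : (h <= H)%N -> 0 <= occ pi h s.
Proof.
elim: h s => [s _|h IH s' hH]; first by case: mdp.
rewrite occupancyS //; apply: sumr_ge0 => s _; rewrite mulr_ge0 ?IH ?(ltnW hH) //.
by apply: sumr_ge0 => a _; rewrite mulr_ge0 ?mean_policy_ge0 ?transition_ge0.
Qed.

Lemma occupancy_sum1 h : (h <= H)%N -> \sum_s occ pi h s = 1.
Proof.
elim: h => [_|h IH hH]; first by case: mdp.
under eq_bigr do rewrite occupancyS //.
rewrite exchange_big -[RHS](IH (ltnW hH)) /=; apply: eq_bigr => s _.
rewrite -mulr_sumr exchange_big /= -[RHS]mulr1 -(mean_policy_sum1 h s).
congr (_ * _); apply: eq_bigr => a _; rewrite -mulr_sumr.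
by case: mdp => _ _ _ /(_ h s a hH) ->; rewrite mulr1.
Qed.

Lemma occupancy_le1 h s : (h <= H)%N -> occ pi h s <= 1.
Proof.
by move=> hH; rewrite -(occupancy_sum1 h hH) ler_sum_term // => s'; apply: occupancy_ge0.
Qed.

Lemma expected_step_reward_ge0 h s : (h < H)%N ->
  (0 <= \int[Pr]_w (\sum_a pi h s (X h w) a * X h w s a)%:E)%E.
Proof.
move=> hH; apply: integral_ge0 => w _; rewrite lee_fin.
by apply: sumr_ge0 => a _; rewrite mulr_ge0 ?policy_ge0 ?reward_ge0.
Qed.

Lemma expected_step_reward_le_sum h s : (h < H)%N ->
  (\int[Pr]_w (\sum_a pi h s (X h w) a * X h w s a)%:E <= (\sum_a r h s a)%:E)%E.
Proof.
move=> hH.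
have mX a : measurable_fun setT (fun w => X h w s a) by exact: reward_measurable.
have [_ _ pim] := pi_valid.
apply: (@le_trans _ _ (\int[Pr]_w (\sum_a 1 * X h w s a)%:E)%E).
  apply: ge0_le_integral => //.
  - by move=> w _; rewrite lee_fin; apply: sumr_ge0 => a _;
      rewrite mulr_ge0 ?policy_ge0 ?reward_ge0.
  - by apply/measurable_EFinP/measurable_sum => a; apply: measurable_funM.
  - by apply/measurable_EFinP/measurable_sum => a; apply: measurable_funM.
  - move=> w _; rewrite lee_fin; apply: ler_sum => a _.
    by rewrite ler_wpM2r ?policy_le1 ?reward_ge0.
rewrite (ge0_integral_wsum Pr mX (fun a w => reward_ge0 h s a w hH) (fun _ => ler01)
  (fun a => reward_mean h s a hH)).
by under eq_bigr do rewrite mul1r.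
Qed.

Lemma value_ge0 : (0 <= val pi)%E.
Proof.
apply: sume_ge0 => h _; apply: sume_ge0 => s _.
by rewrite mule_ge0 ?expected_step_reward_ge0 // lee_fin occupancy_ge0 // ltnW.
Qed.

Lemma value_le_occupancy_reward :
  (val pi <= (\sum_(h < H) \sum_s occ pi h s * \sum_a r h s a)%:E)%E.
Proof.
rewrite /val /value -sumEFin; apply: lee_sum => h _.
rewrite -sumEFin; apply: lee_sum => s _; rewrite EFinM.
by rewrite lee_pmul ?expected_step_reward_ge0 ?expected_step_reward_le_sum // lee_fin occupancy_ge0 // ltnW.
Qed.

Lemma value_le_total_reward :
  (val pi <= (\sum_(h < H) \sum_s \sum_a r h s a)%:E)%E.
Proof.
apply: (le_trans value_le_occupancy_reward); rewrite lee_fin.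
apply: ler_sum => h _; apply: ler_sum => s _.
rewrite ler_piMl ?occupancy_le1 ?(ltnW (ltn_ord h)) //.
by apply: sumr_ge0 => a _; apply: mean_reward_ge0.
Qed.

End ValidPolicy.

Lemma averaged_policy_valid { pi : policy R S A } :
  valid_policy X pi -> valid_policy X (averaged_policy pi).
Proof.
move=> pi_valid; split=> [h s rho a|h s rho|h s a]; first exact: mean_policy_ge0.
- exact: mean_policy_sum1.
- exact: measurable_cst.
Qed.

Lemma mean_averaged_policy pi h s a :
  mean_policy (averaged_policy pi) h s a = mean_policy pi h s a.
Proof. by rewrite /mean_policy /averaged_policy integral_cst_probability. Qed.

Lemma occupancy_averaged { pi : policy R S A } h s : valid_policy X pi -> (h <= H)%N ->
  occ (averaged_policy pi) h s = occ pi h s.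
Proof.
move=> pi_valid; have pi0_valid := averaged_policy_valid pi_valid.
elim: h s => [//|h IH] s' hH.
rewrite !occupancyS //; apply: eq_bigr => s _; rewrite IH ?(ltnW hH) //.
by congr (_ * _); apply: eq_bigr => a _; rewrite mean_averaged_policy.
Qed.

Lemma value_averaged { pi : policy R S A } : valid_policy X pi ->
  val (averaged_policy pi) =
    (\sum_(h < H) \sum_s occ pi h s * \sum_a mean_policy pi h s a * r h s a)%:E.
Proof.
move=> pi_valid; rewrite /val /value -sumEFin; apply: eq_bigr => h _.
rewrite -sumEFin; apply: eq_bigr => s _.
rewrite EFinM occupancy_averaged ?(ltnW (ltn_ord h)) //; congr (_ * _)%E.
apply: ge0_integral_wsum => [a|a w|a|a].
- exact: reward_measurable.
- exact: reward_ge0.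
- exact: mean_policy_ge0.
- exact: reward_mean.
Qed.

Lemma value_le_averaged { pi : policy R S A } (C : R) : valid_policy X pi ->
  (forall h s a a', (h < H)%N -> r h s a <= C * r h s a') ->
  (val pi <= (#|A|%:R * C)%:E * val (averaged_policy pi))%E.
Proof.
move=> pi_valid rC; rewrite value_averaged // -EFinM.
apply: (le_trans (value_le_occupancy_reward pi_valid)).
rewrite lee_fin mulr_sumr; apply: ler_sum => h _.
rewrite mulr_sumr; apply: ler_sum => s _.
rewrite mulrCA ler_wpM2l ?occupancy_ge0 ?(ltnW (ltn_ord h)) //.
apply: sum_le_card_mul_convex => [a||a a']; first exact: mean_policy_ge0.
- exact: mean_policy_sum1.
- exact: rC.
Qed.

Lemma Vstar1_le_Vstar0 (C : R) : 0 <= C ->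
  (forall h s a a', (h < H)%N -> r h s a <= C * r h s a') ->
  (Vstar1 H Pr P mu X <= (#|A|%:R * C)%:E * Vstar0 H Pr P mu X)%E.
Proof.
move=> C0 rC; apply: ge_ereal_sup => _ [pi pi_valid <-].
apply: (le_trans (value_le_averaged _ pi_valid rC)).
rewrite lee_wpmul2l ?lee_fin ?mulr_ge0 //; apply: ereal_sup_ubound.
by exists (averaged_policy pi) => //; split=> //; exact: averaged_policy_valid.
Qed.

Lemma Vstar1_ge0 : (0 < #|A|)%N -> (0 <= Vstar1 H Pr P mu X)%E.
Proof.
move=> A0; pose uniform : policy R S A := fun _ _ _ _ => #|A|%:R^-1.
have uniform_valid : valid_policy X uniform.
  split=> [h s rho a|h s rho|h s a]; first by rewrite invr_ge0 ler0n.
  - by rewrite sumr_const -(mulr_natr #|A|%:R^-1) mulVf // pnatr_eq0 -lt0n.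
  - exact: measurable_cst.
apply: le_ereal_sup_tmp; exists (val uniform); first by exists uniform.
exact: value_ge0.
Qed.

Lemma Vstar1_fin_num : (0 < #|A|)%N -> Vstar1 H Pr P mu X \is a fin_num.
Proof.
move=> A0; rewrite ge0_fin_numE ?Vstar1_ge0 //.
apply: (@le_lt_trans _ _ (\sum_(h < H) \sum_s \sum_a r h s a)%:E); last exact: ltry.
by apply: ge_ereal_sup => _ [pi pi_valid <-]; apply: value_le_total_reward.
Qed.

End LookaheadAveraging.

Lemma reward_ratio_all {R : realType} {S A : finType} {H : nat}
    {r : nat -> S -> A -> R} {C : R} :
  (forall h s a, (h < H)%N -> 0 <= r h s a) ->
  (forall h s, (h < H)%N -> (exists a, 0 < r h s a) ->
     (forall a, 0 < r h s a) /\ (forall a a', r h s a <= C * r h s a')) ->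
  forall h s a a', (h < H)%N -> r h s a <= C * r h s a'.
Proof.
move=> r0 rC h s a a' hH.
have [pos|nopos] := pselect (exists a, 0 < r h s a); first exact: (rC h s hH pos).2.
have r_eq0 b : r h s b = 0.
  by apply/eqP; rewrite eq_le r0 // andbT leNgt; apply/negP => ?; apply: nopos; exists b.
by rewrite !r_eq0 mulr0.
Qed.

Theorem mainTheorem9 (R : realType) (S A : finType) (H : nat)
  (P : nat -> S -> A -> S -> R) (mu : S -> R) (r : nat -> S -> A -> R)
  (C : R) :
  (0 < #|A|)%N ->
  valid_mdp H P mu ->
  (forall h s a, (h < H)%N -> 0 <= r h s a) ->
  1 <= C ->
  (forall h s, (h < H)%N -> (exists a, 0 < r h s a) ->
     (forall a, 0 < r h s a) /\ (forall a a', r h s a <= C * r h s a')) ->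
  ((1 / (#|A|%:R * C))%:E <= CR1 H P mu r)%E.
Proof.
move=> A0 mdp r0 C1 rC.
have C0 : 0 < C := lt_le_trans ltr01 C1.
apply: le_ereal_inf_tmp => _ [dT [T [Pr [X [rewards ->]]]]].
apply: crdiv_ge_inv; first by rewrite mulr_gt0 ?ltr0n.
- exact: Vstar1_ge0 mdp rewards A0.
- exact: Vstar1_fin_num mdp rewards A0.
- exact: Vstar1_le_Vstar0 mdp rewards _ (ltW C0) (reward_ratio_all r0 rC).
Qed.
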